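(* Let $G$ be a very well-covered graph with $2h$ vertices and let $e\in E(G)$. If the ideal $(I(G)^2:e)$ is squarefree, then the graph $G'$ whose edge ideal is $(I(G)^2:e)$ is very well-covered.
   Context: $I(G)=(uv\mid\{u,v\}\in E(G))\subseteq K[V(G)]$ is the edge ideal; the edge $e=\{a,b\}$ is identified with the monomial $ab$. The ideal $(I(G)^2:e)$ is generated by quadratic monomials; when it is squarefree it is the edge ideal of a graph $G'$ on the vertex set $V(G)$. $G$ is very well-covered if it has no isolated vertices, all minimal vertex covers have the same size, and this size is $|V(G)|/2$. *)

From HB Require Import structures.
From mathcomp Require Import all_boot all_order all_algebra.
From mathcomp Require Import mpoly.
Set Implicit Arguments. Unset Strict Implicit. Unset Printing Implicit Defensive.
Import GRing.Theory.
Local Open Scope ring_scope.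

Definition simple_graph n (G : rel 'I_n) :=
  irreflexive G /\ ssrbool.symmetric G.

Definition ideal_gen (P : comNzRingType) (S : P -> Prop) (f : P) : Prop :=
  exists (k : nat) (c g : 'I_k -> P),
    (forall i, S (g i)) /\ f = \sum_(i < k) c i * g i.

Section EdgeIdeal.
Variables (K : fieldType) (n : nat).
Local Notation P := {mpoly K[n]}.

Definition edge_mon (u v : 'I_n) : P := 'X_u * 'X_v.

Definition edge_gens (G : rel 'I_n) (f : P) : Prop :=
  exists u v, G u v /\ f = edge_mon u v.

Definition edge_ideal (G : rel 'I_n) : P -> Prop := ideal_gen (edge_gens G).

Definition edge_ideal_sq (G : rel 'I_n) : P -> Prop :=
  ideal_gen (fun f => exists g1 g2, edge_gens G g1 /\ edge_gens G g2 /\ f = g1 * g2).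

Definition colon (J : P -> Prop) (m : P) (f : P) : Prop := J (f * m).

Definition sqfree_monomial (f : P) : Prop :=
  exists m : 'X_{1..n}, (forall i, (m i <= 1)%N) /\ f = 'X_[m].

Definition squarefree_ideal (J : P -> Prop) : Prop :=
  exists S : P -> Prop, (forall f, S f -> sqfree_monomial f) /\
    (forall f, J f <-> ideal_gen S f).

(* The graph G' on V(G) whose edges are the squarefree quadratic monomials
   x_u x_v (u <> v) of (I(G)^2 : e); when (I(G)^2 : e) is squarefree, it is
   the edge ideal I(G'). *)
Definition colon_graph (G : rel 'I_n) (a b : 'I_n) : 'I_n -> 'I_n -> Prop :=
  fun u v => u <> v /\ colon (edge_ideal_sq G) (edge_mon a b) (edge_mon u v).

End EdgeIdeal.

Definition vertex_cover n (E : 'I_n -> 'I_n -> Prop) (C : {set 'I_n}) : Prop :=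
  forall u v, E u v -> u \in C \/ v \in C.

Definition minimal_vertex_cover n (E : 'I_n -> 'I_n -> Prop) (C : {set 'I_n}) : Prop :=
  vertex_cover E C /\ (forall D : {set 'I_n}, D \proper C -> ~ vertex_cover E D).

Definition very_well_covered n (E : 'I_n -> 'I_n -> Prop) : Prop :=
  (forall v : 'I_n, exists u, E v u) /\
  (forall C : {set 'I_n}, minimal_vertex_cover E C -> (2 * #|C| = n)%N).

From HB Require Import structures.
From mathcomp Require Import all_boot all_order all_algebra.
From mathcomp Require Import mpoly.
From Stdlib Require Import Classical_Prop.

(* Because the generators x_p x_q x_r x_s of I(G)^2 all have degree 4, a
   quadratic monomial x_u x_v lies in (I(G)^2 : x_a x_b) exactly when the
   multiset {u, v, a, b} splits into two edges of G, i.e. when uv is an edge or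
   u, v are joined to a, b by a matching; and no monomial of degree at most 1
   lies in it.  If some w were adjacent to both a and b, then x_w^2 would lie in
   the colon ideal, so a squarefree generator would divide x_w^2, i.e. have
   degree at most 1: impossible.  Hence G' is G plus all edges between N(a) and
   N(b), and G' has no loops.
   A minimal vertex cover C of G' cannot contain both a and b: by minimality
   each of them has a G'-neighbour (which is a G-neighbour) outside C, and
   those two neighbours are adjacent in G'.  Therefore every vertex cover of G
   strictly inside C also covers G', so C is a minimal vertex cover of G and
   has |V(G)|/2 elements. *)

Set Implicit Arguments. Unset Strict Implicit. Unset Printing Implicit Defensive.
Import GRing.Theory.
Local Open Scope ring_scope.

Section SymmetricRel.
Variables (T : eqType) (G : rel T).
Hypothesis Gs : ssrbool.symmetric G.

Lemma rel_perm2 x y u v : perm_eq [:: x; y] [:: u; v] -> G x y -> G u v.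
Proof.
move=> P Gxy; have : u \in [:: x; y] by rewrite (perm_mem P) mem_head.
rewrite !inE => /orP[]/eqP Eu; subst u.
  by move: P; rewrite perm_cons => /perm_small_eq-/(_ isT)[<-].
move: P; rewrite (perm_catC [:: x] [:: y]) perm_cons => /perm_small_eq-/(_ isT)[<-].
by rewrite Gs.
Qed.

Lemma rel_perm4 p q r s u v a b : G p q -> G r s ->
  perm_eq [:: p; q; r; s] [:: u; v; a; b] ->
  G u v || G u a && G v b || G u b && G v a.
Proof.
wlog -> : p q r s / u = p => [base Gpq Grs P|Gpq Grs].
  have : u \in [:: p; q; r; s] by rewrite (perm_mem P) mem_head.
  rewrite !inE => /or4P[]/eqP Eu.
  - exact: (base p q r s).
  - apply: (base q p r s) => //; first by rewrite Gs.
    by rewrite (perm_catCA [:: q] [:: p]).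
  - by apply: (base r s p q); rewrite // (perm_catC [:: r; s]).
  - apply: (base s r p q) => //; first by rewrite Gs.
    rewrite (perm_catC [:: s; r]); apply: perm_trans P.
    by rewrite 2!perm_cons (perm_catC [:: s]).
rewrite perm_cons => P; have : q \in [:: v; a; b] by rewrite -(perm_mem P) mem_head.
rewrite !inE => /or3P[]/eqP Eq; subst q; first by rewrite Gpq.
- move: P; rewrite perm_sym (perm_catCA [:: v] [:: a]) perm_cons perm_sym.
  by move/rel_perm2/(_ Grs) => Gvb; rewrite Gpq Gvb orbT.
- move: P; rewrite perm_sym (perm_rcons b [:: v; a]) perm_cons perm_sym.
  by move/rel_perm2/(_ Grs) => Gva; rewrite Gpq Gva !orbT.
Qed.

End SymmetricRel.

Section Multisets.
Variable n : nat.
Implicit Types (m : 'X_{1..n}) (s : seq 'I_n).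

Lemma s2m_nil : s2m [::] = 0%MM :> 'X_{1..n}.
Proof. by apply/mnmP => i; rewrite !mnmE. Qed.

Lemma s2m_cons x s : s2m (x :: s) = (U_(x) + s2m s)%MM.
Proof. by apply/mnmP => i; rewrite mnmDE !mnmE. Qed.

Lemma s2m_cat s1 s2 : s2m (s1 ++ s2) = (s2m s1 + s2m s2)%MM.
Proof. by apply/mnmP => i; rewrite mnmDE !mnmE count_cat. Qed.

Lemma mdeg_s2m s : mdeg (s2m s) = size s.
Proof. by elim: s => [|x s IH]; rewrite ?s2m_nil ?mdeg0 // s2m_cons mdegD mdeg1 IH. Qed.

Lemma s2m_perm s1 s2 : s2m s1 = s2m s2 -> perm_eq s1 s2.
Proof. by move/mnmP => E; apply/allP => x _ /=; have := E x; rewrite !mnmE => ->. Qed.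

Lemma lem_mdeg m1 m2 : (m1 <= m2)%MM -> (mdeg m1 <= mdeg m2)%N.
Proof. by move/submK <-; rewrite mdegD leq_addl. Qed.

Lemma lem_mdeg_eq m1 m2 : (m1 <= m2)%MM -> mdeg m1 = mdeg m2 -> m1 = m2.
Proof.
move=> le12 deg12; rewrite -(submK le12).
suff -> : (m2 - m1 = 0)%MM by rewrite add0m.
apply/eqP; rewrite -mdeg_eq0 -(eqn_add2r (mdeg m1)) -mdegD submK //.
by rewrite deg12 add0n.
Qed.

End Multisets.

Lemma ideal_gen1 (P : comNzRingType) (S : P -> Prop) f : S f -> ideal_gen S f.
Proof. by exists 1%N, (fun=> 1), (fun=> f); rewrite big_ord1 mul1r. Qed.

Lemma mpolyX_notin_ideal_gen (R : comNzRingType) n (S : {mpoly R[n]} -> Prop) m :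
  (forall f, S f -> exists2 m', f = 'X_[m'] & ~~ (m' <= m)%MM) -> ~ ideal_gen S 'X_[m].
Proof.
move=> Smon [k [c [g [Sg Em]]]].
have : ('X_[m] : {mpoly R[n]})@_m = 0.
  rewrite Em raddf_sum big1 // => i _.
  have [m' -> m'm] := Smon _ (Sg i).
  apply/eqP; apply: contraNT m'm; rewrite -mcoeff_msupp (perm_mem (msuppMX _ _)).
  by case/mapP => m'' _ ->; apply: lem_addr.
by rewrite mcoeffX eqxx => /eqP; rewrite oner_eq0.
Qed.

Definition colon_edge n (G : rel 'I_n) (a b : 'I_n) : rel 'I_n :=
  fun u v => G u v || G u a && G v b || G u b && G v a.

Section EdgeIdealColon.
Variables (K : fieldType) (n : nat) (G : rel 'I_n) (a b : 'I_n).
Local Notation J := (colon (edge_ideal_sq (K := K) G) (edge_mon K a b)).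
Implicit Types (u v p q r s w : 'I_n) (f : {mpoly K[n]}).

Lemma edge_monE u v : edge_mon K u v = 'X_[s2m [:: u; v]].
Proof. by rewrite /edge_mon 2!s2m_cons s2m_nil addm0 mpolyXD. Qed.

Lemma edge_sq_gen_mpolyX f :
  (exists g1 g2, edge_gens G g1 /\ edge_gens G g2 /\ f = g1 * g2) ->
  exists p q r s, [/\ G p q, G r s & f = 'X_[s2m [:: p; q; r; s]]].
Proof.
move=> [_ [_ [[p [q [Gpq ->]]] [[r [s [Grs ->]]] ->]]]].
by exists p, q, r, s; rewrite !edge_monE -mpolyXD -s2m_cat.
Qed.

Lemma colon_edge_sq_prod f p q r s : G p q -> G r s ->
  f * edge_mon K a b = edge_mon K p q * edge_mon K r s -> J f.
Proof.
move=> Gpq Grs E; apply: ideal_gen1; exists (edge_mon K p q), (edge_mon K r s).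
by rewrite E; split; [exists p, q | split=> //; exists r, s].
Qed.

Lemma colon_edge_sqP u v : ssrbool.symmetric G -> G a b ->
  J (edge_mon K u v) <-> colon_edge G a b u v.
Proof.
move=> Gs Gab; split=> [|/orP[/orP[Guv|/andP[Gua Gvb]]|/andP[Gub Gva]]].
- rewrite /colon !edge_monE -mpolyXD -s2m_cat /= => Juv.
  apply/negPn/negP => Nuv; apply: (mpolyX_notin_ideal_gen _ Juv).
  move=> f /edge_sq_gen_mpolyX [p [q [r [s [Gpq Grs ->]]]]].
  exists (s2m [:: p; q; r; s]) => //; apply: contra Nuv => le.
  apply: (rel_perm4 Gs Gpq Grs); apply/s2m_perm/(lem_mdeg_eq le).
  by rewrite !mdeg_s2m.
- exact: colon_edge_sq_prod Guv Gab _.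
- by apply: colon_edge_sq_prod Gua Gvb _; rewrite /edge_mon mulrACA.
- by apply: colon_edge_sq_prod Gub Gva _; rewrite /edge_mon [X in _ * X]mulrC mulrACA.
Qed.

Lemma colon_edge_sq_mdeg m : (mdeg m < 2)%N -> ~ J 'X_[m].
Proof.
rewrite /colon edge_monE -mpolyXD => deg_m; apply: mpolyX_notin_ideal_gen.
move=> f /edge_sq_gen_mpolyX [p [q [r [s [_ _ ->]]]]].
exists (s2m [:: p; q; r; s]) => //; apply/negP => /lem_mdeg.
by rewrite mdegD !mdeg_s2m addn2 !ltnS leqNgt deg_m.
Qed.

Lemma squarefree_colon_no_common_nbr :
  squarefree_ideal J -> forall w, G w a -> G w b -> False.
Proof.
move=> [S [Ssqf JS]] w Gwa Gwb.
have : J 'X_[s2m [:: w; w]].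
  by rewrite -edge_monE; apply: colon_edge_sq_prod Gwa Gwb _; rewrite /edge_mon mulrACA.
move/JS; apply: mpolyX_notin_ideal_gen => f Sf.
have [m [m_le1 Ef]] := Ssqf f Sf; exists m => //; apply/negP => le_m.
have : J 'X_[m] by apply/JS; rewrite -Ef; apply: ideal_gen1.
apply: colon_edge_sq_mdeg; rewrite ltnS -(mdeg1 w); apply: lem_mdeg.
apply/mnm_lepP => i; move/mnm_lepP/(_ i): le_m; rewrite !mnmE /=.
by case: (w == i) (m_le1 i).
Qed.

End EdgeIdealColon.

Section VertexCovers.
Variable n : nat.
Implicit Types (E : 'I_n -> 'I_n -> Prop) (C D : {set 'I_n}).

Lemma vertex_cover_sub E E' C :
  (forall u v, E u v -> E' u v) -> vertex_cover E' C -> vertex_cover E C.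
Proof. by move=> sEE' covC u v /sEE' /covC. Qed.

Lemma very_well_covered_ext E E' :
  (forall u v, E u v <-> E' u v) -> very_well_covered E <-> very_well_covered E'.
Proof.
move=> eqE.
have minE C : minimal_vertex_cover E C <-> minimal_vertex_cover E' C.
  have covE D : vertex_cover E D <-> vertex_cover E' D.
    by split; apply: vertex_cover_sub => u v /eqE.
  rewrite /minimal_vertex_cover covE.
  by split=> -[? minC]; split=> // D /minC; rewrite covE.
by rewrite /very_well_covered; split=> -[iso cov]; split=> [v|C /minE/cov //];
  have [u /eqE] := iso v; exists u.
Qed.

Lemma minimal_vertex_cover_nbr (E : rel 'I_n) C y :
  ssrbool.symmetric E -> irreflexive E ->
  minimal_vertex_cover (fun u v => E u v) C -> y \in C -> exists2 t, t \notin C & E y t.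
Proof.
move=> Es Eirr [covC minC] yC; apply: NNPP => no_nbr.
have nbrC t : E y t -> t \in C :\ y.
  move=> Eyt; rewrite in_setD1; apply/andP; split.
    by apply: contraTneq Eyt => ->; rewrite Eirr.
  by apply/negPn/negP => tC; apply: no_nbr; exists t.
apply: (minC _ (properD1 yC)) => u v.
have [-> Eyv | uy] := eqVneq u y; first by right; apply: nbrC.
have [-> Euy | vy Euv] := eqVneq v y; first by left; apply: nbrC; rewrite Es.
by rewrite !in_setD1 uy vy; apply: covC.
Qed.

End VertexCovers.

Section ColonGraph.
Variables (n : nat) (G : rel 'I_n) (a b : 'I_n).
Hypotheses (Girr : irreflexive G) (Gs : ssrbool.symmetric G).
Hypothesis no_common_nbr : forall w, G w a -> G w b -> False.
Local Notation E := (colon_edge G a b).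
Local Notation EP := (fun u v => colon_edge G a b u v).

Lemma colon_edge_sym : ssrbool.symmetric E.
Proof.
move=> u v; rewrite /colon_edge Gs (andbC (G v a)) (andbC (G v b)) -!orbA.
by rewrite (orbC (G u a && _)).
Qed.

Lemma colon_edge_irr : irreflexive E.
Proof.
move=> u; rewrite /colon_edge Girr /= andbC orbb.
by apply/negP => /andP[/no_common_nbr].
Qed.

Lemma colon_edgeW u v : G u v -> E u v.
Proof. by rewrite /colon_edge => ->. Qed.

Lemma colon_edge_cross s t : G s a -> G t b -> E s t.
Proof. by rewrite /colon_edge => -> ->; rewrite orbT. Qed.

Lemma colon_edge_aE t : E a t = G a t.
Proof. by rewrite /colon_edge Girr (Gs t a) /=; case: (G a t); rewrite ?andbF. Qed.

Lemma colon_edge_bE t : E b t = G b t.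
Proof. by rewrite /colon_edge Girr (Gs t b) /= orbF; case: (G b t); rewrite ?andbF. Qed.

Lemma colon_edge_cover D : vertex_cover (fun u v => G u v) D ->
  ~~ ((a \in D) && (b \in D)) -> vertex_cover EP D.
Proof.
move=> covD abD u v /orP[/orP[Guv | /andP[Gua Gvb]] | /andP[Gub Gva]]; first exact: covD.
all: have [uD | uD] := boolP (u \in D); [by left | right].
all: apply: contraNT abD => vD.
- by move: (covD _ _ Gua) (covD _ _ Gvb); rewrite (negPf uD) (negPf vD) => -[//|->] [].
- by move: (covD _ _ Gva) (covD _ _ Gub); rewrite (negPf uD) (negPf vD) => -[//|->] [].
Qed.

Lemma minimal_colon_cover_ab C :
  minimal_vertex_cover EP C -> ~~ ((a \in C) && (b \in C)).
Proof.
move=> minC; apply/negP => /andP[aC bC].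
have [s sC] := minimal_vertex_cover_nbr colon_edge_sym colon_edge_irr minC aC.
rewrite colon_edge_aE Gs => Gsa.
have [t tC] := minimal_vertex_cover_nbr colon_edge_sym colon_edge_irr minC bC.
rewrite colon_edge_bE Gs => Gtb.
by case: (minC.1 _ _ (colon_edge_cross Gsa Gtb)); apply/negP.
Qed.

Lemma minimal_colon_cover C :
  minimal_vertex_cover EP C -> minimal_vertex_cover (fun u v => G u v) C.
Proof.
move=> minC; have abC := minimal_colon_cover_ab minC; case: minC => covC minC.
split=> [|D ltDC covD]; first exact: vertex_cover_sub colon_edgeW covC.
apply: (minC D ltDC); apply: colon_edge_cover covD _; apply: contra abC.
by have /subsetP sDC := proper_sub ltDC; case/andP => /sDC -> /sDC ->.
Qed.

Lemma very_well_covered_colon_edge :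
  very_well_covered (fun u v => G u v) -> very_well_covered EP.
Proof.
move=> [no_iso cov]; split=> [v | C /minimal_colon_cover /cov //].
by have [u Gvu] := no_iso v; exists u; apply: colon_edgeW.
Qed.

End ColonGraph.

Lemma colon_graphP (K : fieldType) n (G : rel 'I_n) (a b : 'I_n) :
  simple_graph G -> G a b -> (forall w, G w a -> G w b -> False) ->
  forall u v, colon_graph K G a b u v <-> colon_edge G a b u v.
Proof.
move=> [Girr Gs] Gab no_nbr u v; rewrite /colon_graph colon_edge_sqP //.
split=> [[]//|Euv]; split=> // eq_uv; move: Euv.
by rewrite eq_uv (colon_edge_irr Girr no_nbr).
Qed.

Theorem theorem3p6 (K : fieldType) (h : nat) (G : rel 'I_(2 * h)) (a b : 'I_(2 * h)) :
  simple_graph G ->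
  very_well_covered (fun u v => G u v) ->
  G a b ->
  squarefree_ideal (colon (edge_ideal_sq (K := K) G) (edge_mon K a b)) ->
  very_well_covered (colon_graph K G a b).
Proof.
move=> simG vwcG Gab sqf; have no_nbr := squarefree_colon_no_common_nbr sqf.
apply/(very_well_covered_ext (colon_graphP K simG Gab no_nbr)).
by case: simG => Girr Gs; apply: very_well_covered_colon_edge.
Qed.
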